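(* In $2\times2\times3$ Abalone, let $C1$ be the constellation with Black marbles on $c,f,g$ and Gray marbles on $a,d,h$; let $C2$ have Black on $c,f,g$ and Gray on $a,d,e$; let $C3$ have Black on $c,f,g$ and Gray on $d,e,h$. If $C$ is any constellation obtained from $C1$ by a single legal Gray move and $C$ is isomorphic to neither $C2$ nor $C3$, then Black, moving next from $C$, can force a win.
   Context: The $2\times2\times3$ board has 10 hexagonal cells in three vertical columns of sizes 3, 4, 3. In axial coordinates (cells adjacent when differing by $\pm(0,1),\pm(1,0),\pm(1,-1)$) the cells are $a=(0,0)$, $b=(0,1)$, $c=(0,2)$ (left column, bottom to top), $d=(1,-1)$, $e=(1,0)$, $f=(1,1)$, $g=(1,2)$ (middle column, bottom to top), $h=(2,-1)$, $i=(2,0)$, $j=(2,1)$ (right column, bottom to top). Its maximal lines are $a$-$b$-$c$, $d$-$e$-$f$-$g$, $h$-$i$-$j$, $a$-$e$-$i$, $b$-$f$-$j$, $c$-$g$, $d$-$h$, $a$-$d$, $b$-$e$-$h$, $c$-$f$-$i$, $g$-$j$; adjacent cells are consecutive cells of these lines. A constellation assigns each cell black, gray or empty; each player has 3 marbles. Black (Left) and Gray (Right) alternate turns. On a turn a player moves 1, 2 or 3 of their own marbles occupying consecutive cells of a line, one step in one of the six lattice directions. Broadside move (direction not parallel to the group's line, or a single marble): each moved marble must land on an empty board cell. In-line move (direction parallel to the line, group of $k$ marbles): if the cell $X$ beyond the front marble is an empty board cell the group advances; if $X$ holds opponent marbles, forming $m$ consecutive opponent marbles in that direction, the push is legal only if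 $m<k$ and the cell after them is empty or off the board, and then all shift one step, an opponent marble leaving the board being removed; moves with $X$ off the board or holding an own marble are illegal, and one may never move one's own marble off the board. The game ends as soon as one marble is pushed off, the pusher winning; never-ending play is a draw. A player can force a win from a constellation with a given player to move if they have a strategy guaranteeing a push-off in finitely many moves against all opponent play. The symmetries of this board are the identity, the left-right reflection ($a\leftrightarrow h$, $b\leftrightarrow i$, $c\leftrightarrow j$, middle column fixed), the top-bottom reflection ($a\leftrightarrow c$, $d\leftrightarrow g$, $e\leftrightarrow f$, $h\leftrightarrow j$, $b,i$ fixed), and their composition; two constellations are isomorphic if a symmetry maps one onto the other. *)

From Stdlib Require Import ZArith List Bool.
Import ListNotations.
Open Scope Z_scope.

Inductive cell := ca | cb | cc | cd | ce | cf | cg | ch | ci | cj.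

Definition all_cells : list cell := [ca; cb; cc; cd; ce; cf; cg; ch; ci; cj].

(* axial coordinates *)
Definition coord (x : cell) : Z * Z :=
  match x with
  | ca => (0, 0) | cb => (0, 1) | cc => (0, 2)
  | cd => (1, -1) | ce => (1, 0) | cf => (1, 1) | cg => (1, 2)
  | ch => (2, -1) | ci => (2, 0) | cj => (2, 1)
  end.

Definition peqb (p q : Z * Z) : bool := (fst p =? fst q) && (snd p =? snd q).
Definition padd (p q : Z * Z) : Z * Z := (fst p + fst q, snd p + snd q).
Definition pscale (n : Z) (p : Z * Z) : Z * Z := (n * fst p, n * snd p).

Definition cell_at (q : Z * Z) : option cell :=
  find (fun x => peqb (coord x) q) all_cells.

Inductive dir := dN | dS | dE | dW | dNW | dSE.
Definition dvec (d : dir) : Z * Z :=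
  match d with
  | dN => (0, 1) | dS => (0, -1) | dE => (1, 0) | dW => (-1, 0)
  | dSE => (1, -1) | dNW => (-1, 1)
  end.
Definition dneg (d : dir) : dir :=
  match d with
  | dN => dS | dS => dN | dE => dW | dW => dE | dSE => dNW | dNW => dSE
  end.
Definition dir_eqb (d e : dir) : bool := peqb (dvec d) (dvec e).

Inductive content := Emp | Blk | Gry.
Definition content_eqb (x y : content) : bool :=
  match x, y with
  | Emp, Emp | Blk, Blk | Gry, Gry => true
  | _, _ => false
  end.
Definition ocontent_eqb (x y : option content) : bool :=
  match x, y with
  | Some x, Some y => content_eqb x y
  | None, None => true
  | _, _ => false
  end.

Definition board := cell -> content.

(* Black = Left, Gray = Right *)
Inductive player := Black | Gray.
Definition opp (p : player) : player := match p with Black => Gray | Gray => Black end.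
Definition own (p : player) : content := match p with Black => Blk | Gray => Gry end.

(* content at a lattice point; None = off the board *)
Definition at_ (s : board) (q : Z * Z) : option content :=
  match cell_at q with Some x => Some (s x) | None => None end.

(* ---------- moves ----------
   A move of k (1..3) own marbles occupying the consecutive cells
   f, f+u, ..., f+(k-1)u of a line, moved one step in direction v.
   mpush = number of opponent marbles pushed (0 if none). *)
Record move := Move { mf : cell; mu : dir; mk : nat; mv : dir; mpush : nat }.

Definition gpos (m : move) (i : nat) : Z * Z :=
  padd (coord (mf m)) (pscale (Z.of_nat i) (dvec (mu m))).

Definition broadside (m : move) : bool :=
  Nat.eqb (mk m) 1 || negb (dir_eqb (mv m) (mu m) || dir_eqb (mv m) (dneg (mu m))).

Definition front (m : move) : Z * Z :=
  if dir_eqb (mv m) (mu m) then gpos m (mk m - 1) else gpos m 0.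

Definition beyond (m : move) (i : nat) : Z * Z :=
  padd (front m) (pscale (Z.of_nat i) (dvec (mv m))).

Definition legal (p : player) (s : board) (m : move) : bool :=
  (1 <=? mk m)%nat && (mk m <=? 3)%nat &&
  forallb (fun i => ocontent_eqb (at_ s (gpos m i)) (Some (own p))) (seq 0 (mk m)) &&
  if broadside m then
    Nat.eqb (mpush m) 0 &&
    forallb (fun i => ocontent_eqb (at_ s (padd (gpos m i) (dvec (mv m)))) (Some Emp))
            (seq 0 (mk m))
  else if Nat.eqb (mpush m) 0 then
    ocontent_eqb (at_ s (beyond m 1)) (Some Emp)
  else
    (mpush m <? mk m)%nat &&
    forallb (fun j => ocontent_eqb (at_ s (beyond m (S j))) (Some (own (opp p))))
            (seq 0 (mpush m)) &&
    match at_ s (beyond m (S (mpush m))) with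
    | None => true
    | Some Emp => true
    | Some _ => false
    end.

Definition moved (m : move) : list (Z * Z) :=
  map (gpos m) (seq 0 (mk m)) ++ map (fun j => beyond m (S j)) (seq 0 (mpush m)).

(* resulting constellation: every moved marble shifts by v; marbles
   leaving the board disappear *)
Definition apply_move (s : board) (m : move) : board :=
  fun x =>
    let q := coord x in
    let q0 := padd q (pscale (-1) (dvec (mv m))) in
    if existsb (peqb q0) (moved m) then
      match at_ s q0 with Some c => c | None => Emp end
    else if existsb (peqb q) (moved m) then Emp
    else s x.

Definition pushes_off (m : move) : bool :=
  existsb (fun q => match cell_at (padd q (dvec (mv m))) with None => true | Some _ => false end)
          (moved m).

(* ---------- forced wins ----------
   fwin w t s : player w can force a push-off in finitely many moves
   from constellation s with player t to move. *)
Inductive fwin (w : player) : player -> board -> Prop :=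
| fw_push : forall s m, legal w s m = true -> pushes_off m = true -> fwin w w s
| fw_step : forall s m, legal w s m = true -> pushes_off m = false ->
    fwin w (opp w) (apply_move s m) -> fwin w w s
| fw_resp : forall s,
    (forall m, legal (opp w) s m = true ->
       pushes_off m = false /\ fwin w w (apply_move s m)) ->
    fwin w (opp w) s.

Definition sym_lr (x : cell) : cell :=
  match x with
  | ca => ch | ch => ca | cb => ci | ci => cb | cc => cj | cj => cc
  | y => y
  end.
Definition sym_tb (x : cell) : cell :=
  match x with
  | ca => cc | cc => ca | cd => cg | cg => cd | ce => cf | cf => ce
  | ch => cj | cj => ch | y => y
  end.
Definition symmetries : list (cell -> cell) :=
  [fun x => x; sym_lr; sym_tb; fun x => sym_lr (sym_tb x)].

Definition iso (s t : board) : Prop :=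
  exists sg, In sg symmetries /\ forall x, t (sg x) = s x.

Definition C1 : board := fun x =>
  match x with cc | cf | cg => Blk | ca | cd | ch => Gry | _ => Emp end.
Definition C2 : board := fun x =>
  match x with cc | cf | cg => Blk | ca | cd | ce => Gry | _ => Emp end.
Definition C3 : board := fun x =>
  match x with cc | cf | cg => Blk | cd | ce | ch => Gry | _ => Emp end.

(* Black wins within three of his own moves by following a fixed table of
   replies, one for each of the fourteen positions he can face.  Every player
   has finitely many moves, so this is an exhaustive computation; a successful
   run of the checker yields a derivation of [fwin] by induction on the number
   of Black moves left. *)

From Stdlib Require Import Arith Bool List Lia FunctionalExtensionality.
Import ListNotations.

Definition all_dirs : list dir := [dN; dS; dE; dW; dNW; dSE].

Lemma in_all_cells (x : cell) : In x all_cells.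
Proof. destruct x; simpl; tauto. Qed.

Lemma in_all_dirs (d : dir) : In d all_dirs.
Proof. destruct d; simpl; tauto. Qed.

Definition all_moves : list move :=
  flat_map (fun f => flat_map (fun u => flat_map (fun k => flat_map (fun v =>
    map (Move f u k v) (seq 0 k)) all_dirs) (seq 1 3)) all_dirs) all_cells.

Lemma legal_move_bounds (p : player) (s : board) (m : move) :
  legal p s m = true -> (1 <= mk m <= 3)%nat /\ (mpush m < mk m)%nat.
Proof.
  unfold legal; rewrite !andb_true_iff, !Nat.leb_le.
  intros [[[Hk1 Hk3] _] Hrest]; split; [lia|].
  destruct (broadside m).
  - apply andb_true_iff in Hrest as [Hp _]; apply Nat.eqb_eq in Hp; lia.
  - destruct (Nat.eqb (mpush m) 0) eqn:Hp; [apply Nat.eqb_eq in Hp; lia|].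
    apply andb_true_iff in Hrest as [[Hp' _]%andb_true_iff _].
    apply Nat.ltb_lt in Hp'; exact Hp'.
Qed.

Lemma legal_in_all_moves (p : player) (s : board) (m : move) :
  legal p s m = true -> In m all_moves.
Proof.
  intros [Hk Hp]%legal_move_bounds; destruct m as [f u k v n]; cbn in Hk, Hp.
  apply in_flat_map; exists f; split; [apply in_all_cells|].
  apply in_flat_map; exists u; split; [apply in_all_dirs|].
  apply in_flat_map; exists k; split; [apply in_seq; lia|].
  apply in_flat_map; exists v; split; [apply in_all_dirs|].
  apply in_map, in_seq; lia.
Qed.

Lemma content_eqb_eq (x y : content) : content_eqb x y = true -> x = y.
Proof. destruct x, y; simpl; congruence. Qed.

Definition board_eqb (s t : board) : bool :=
  forallb (fun x => content_eqb (s x) (t x)) all_cells.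

Lemma board_eqb_eq (s t : board) : board_eqb s t = true -> forall x, s x = t x.
Proof.
  intros H x; apply content_eqb_eq.
  exact (proj1 (forallb_forall _ _) H x (in_all_cells x)).
Qed.

Definition isob (s t : board) : bool :=
  existsb (fun sg => board_eqb (fun x => t (sg x)) s) symmetries.

Lemma isob_iso (s t : board) : isob s t = true -> iso s t.
Proof.
  intros [sg [Hsg Heq]]%existsb_exists.
  exists sg; split; [exact Hsg | exact (board_eqb_eq _ _ Heq)].
Qed.

Definition cell_index (x : cell) : nat :=
  match x with
  | ca => 0 | cb => 1 | cc => 2 | cd => 3 | ce => 4
  | cf => 5 | cg => 6 | ch => 7 | ci => 8 | cj => 9
  end.

Definition board_of (l : list content) : board := fun x => nth (cell_index x) l Emp.

(* Under evaluation, [freeze s] stores the ten contents of [s] in a list, so boards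
   produced by successive moves do not pile up as nested closures. *)
Definition freeze (s : board) : board := board_of (map s all_cells).

Lemma freeze_id (s : board) : freeze s = s.
Proof. apply functional_extensionality; intros []; reflexivity. Qed.

Section StrategyCheck.

Variables (w : player) (strategy : board -> option move).

Fixpoint strategy_wins (n : nat) (s : board) : bool :=
  match n with
  | O => false
  | S n =>
    match strategy s with
    | None => false
    | Some m =>
      if negb (legal w s m) then false else
      if pushes_off m then true else
      let s' := freeze (apply_move s m) in
      forallb (fun m' =>
        if negb (legal (opp w) s' m') then true else
        if pushes_off m' then false else
        strategy_wins n (freeze (apply_move s' m'))) all_moves
    end
  end.

Lemma strategy_wins_fwin (n : nat) (s : board) :
  strategy_wins n s = true -> fwin w w s.
Proof.
  revert s; induction n as [|n IH]; intros s H; [discriminate|]; cbn [strategy_wins] in H.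
  destruct (strategy s) as [m|]; [|discriminate].
  destruct (legal w s m) eqn:Hm; [|discriminate]; cbv [negb] in H.
  destruct (pushes_off m) eqn:Hoff; [exact (fw_push _ _ _ Hm Hoff)|].
  rewrite freeze_id in H.
  apply (fw_step _ _ _ Hm Hoff), fw_resp; intros m' Hm'.
  pose proof (proj1 (forallb_forall _ _) H m' (legal_in_all_moves _ _ _ Hm')) as Hr.
  cbv beta in Hr; rewrite Hm' in Hr; cbv [negb] in Hr.
  destruct (pushes_off m'); [discriminate|].
  rewrite freeze_id in Hr; split; [reflexivity | exact (IH _ Hr)].
Qed.

End StrategyCheck.

Definition black_replies : list (list content * move) := [
  ([Emp; Gry; Blk; Emp; Gry; Blk; Blk; Gry; Emp; Emp], Move cf dN 2 dS 1);
  ([Gry; Emp; Blk; Gry; Blk; Blk; Emp; Gry; Emp; Emp], Move ce dN 2 dS 1);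
  ([Gry; Gry; Blk; Emp; Blk; Blk; Emp; Gry; Emp; Emp], Move cc dSE 2 dSE 0);
  ([Emp; Gry; Emp; Gry; Blk; Blk; Emp; Gry; Blk; Emp], Move ce dN 2 dS 1);
  ([Emp; Gry; Gry; Emp; Blk; Blk; Emp; Gry; Blk; Emp], Move cf dSE 2 dNW 1);
  ([Gry; Emp; Gry; Emp; Blk; Blk; Emp; Gry; Blk; Emp], Move ce dE 2 dW 1);
  ([Gry; Gry; Emp; Gry; Blk; Blk; Emp; Emp; Blk; Emp], Move ce dN 2 dS 1);
  ([Emp; Gry; Blk; Gry; Blk; Blk; Emp; Emp; Gry; Emp], Move cc dSE 2 dSE 1);
  ([Emp; Gry; Blk; Gry; Emp; Blk; Blk; Gry; Emp; Emp], Move cf dN 2 dS 0);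
  ([Gry; Emp; Blk; Emp; Gry; Blk; Blk; Emp; Gry; Emp], Move cc dSE 2 dSE 1);
  ([Gry; Emp; Blk; Emp; Gry; Blk; Blk; Gry; Emp; Emp], Move cf dN 2 dS 1);
  ([Emp; Gry; Blk; Gry; Blk; Blk; Emp; Gry; Emp; Emp], Move ce dN 2 dS 1);
  ([Gry; Emp; Blk; Gry; Blk; Blk; Emp; Emp; Gry; Emp], Move cc dSE 2 dSE 1);
  ([Gry; Emp; Blk; Gry; Emp; Blk; Blk; Emp; Gry; Emp], Move cc dSE 2 dSE 1)].

Definition black_strategy (s : board) : option move :=
  option_map snd (find (fun e => board_eqb (board_of (fst e)) s) black_replies).

Lemma black_wins_after_C1_replies :
  forallb (fun m =>
    if negb (legal Gray C1 m) then true else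
    if isob (apply_move C1 m) C2 || isob (apply_move C1 m) C3 then true else
    strategy_wins Black black_strategy 3 (freeze (apply_move C1 m))) all_moves = true.
Proof. vm_compute; reflexivity. Qed.

Theorem lemma5 : forall m : move,
  legal Gray C1 m = true ->
  ~ iso (apply_move C1 m) C2 ->
  ~ iso (apply_move C1 m) C3 ->
  fwin Black Black (apply_move C1 m).
Proof.
  intros m Hm HC2 HC3.
  pose proof (proj1 (forallb_forall _ _) black_wins_after_C1_replies m
                (legal_in_all_moves _ _ _ Hm)) as H.
  cbv beta in H; rewrite Hm in H; cbv [negb] in H.
  destruct (isob (apply_move C1 m) C2) eqn:E2; [now destruct HC2; apply isob_iso|].
  destruct (isob (apply_move C1 m) C3) eqn:E3; [now destruct HC3; apply isob_iso|].
  rewrite freeze_id in H; exact (strategy_wins_fwin _ _ _ _ H).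
Qed.
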